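(* Let $k,s,d$ be positive integers and let $\alpha,\beta\ge0$ be reals. For a sequence $e=(e_1,\dots,e_k)\in[s+1]^k$ define $c(i,j)=|\{\ell\le j: e_\ell=i\}|$ for $i\in[s+1]$, $j\in[k]$, and $$F^*(e)=\sum_{j=1}^k\min\Big\{\big(d-\max_{i\in[s+1]\setminus\{e_j\}}c(i,j)\big)\beta,\ \alpha\Big\}.$$ Then for every $e\in[s+1]^k$ there exists $e'\in[2]^k$ with $F^*(e')\le F^*(e)$ (where $F^*(e')$ is computed by the same formula, viewing $e'$ as an element of $[s+1]^k$).
   Context: $[a]=\{1,\dots,a\}$. *)

From HB Require Import structures.
From mathcomp Require Import all_boot all_order all_algebra.
From mathcomp Require Import reals.
Set Implicit Arguments. Unset Strict Implicit. Unset Printing Implicit Defensive.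
Import Order.TTheory GRing.Theory Num.Theory.
Local Open Scope ring_scope.

(* A sequence e in [s+1]^k is a map 'I_k -> 'I_(s.+1); value v : 'I_(s.+1)
   represents the element v+1 of [s+1], and index j : 'I_k represents j+1. *)

Definition cnt (k s : nat) (e : 'I_k -> 'I_s.+1) (i : 'I_s.+1) (j : 'I_k) : nat :=
  #|[set l : 'I_k | (l <= j)%N && (e l == i)]|.

Definition maxc (k s : nat) (e : 'I_k -> 'I_s.+1) (j : 'I_k) : nat :=
  (\max_(i : 'I_s.+1 | i != e j) cnt e i j)%N.

Definition Fstar (R : realType) (d : nat) (alpha beta : R)
  (k s : nat) (e : 'I_k -> 'I_s.+1) : R :=
  \sum_(j < k) Num.min ((d%:R - (maxc e j)%:R) * beta) alpha.

From HB Require Import structures.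
From mathcomp Require Import all_boot all_order all_algebra.
From mathcomp Require Import reals.
From mathcomp Require Import zify.
Set Implicit Arguments. Unset Strict Implicit. Unset Printing Implicit Defensive.
Import Order.TTheory GRing.Theory Num.Theory.

(* Each term of F* is nonincreasing in the rival count maxc, so it suffices
   to build a binary sequence whose rival counts dominate those of e.  It is
   built greedily, letter by letter, maintaining two piles (the counts of the
   two letters so far) whose larger and smaller sizes bound, respectively, the
   largest count of e and the minimum of any two distinct counts of e.  The new
   letter goes on the larger pile if the smaller one already reaches the
   current rival count of e, and on the smaller pile otherwise. *)

Section Counts.

Variable T : finType.

Definition occ (f : nat -> T) (i : T) (j : nat) : nat :=
  \sum_(l < j) (f l == i).

Definition rival (f : nat -> T) (j : nat) : nat :=
  \max_(i | i != f j) occ f i j.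

Lemma occS (f : nat -> T) i j : occ f i j.+1 = occ f i j + (f j == i).
Proof. by rewrite /occ big_ord_recr. Qed.

Definition dominated (c : T -> nat) (p : bool -> nat) : Prop :=
  (forall i, c i <= maxn (p false) (p true)) /\
  (forall i i', i != i' -> minn (c i) (c i') <= minn (p false) (p true)).

End Counts.

Lemma occ_inj (T U : finType) (g : T -> U) (f : nat -> T) i j :
  injective g -> occ (g \o f) (g i) j = occ f i j.
Proof. by move=> g_inj; apply: eq_bigr => l _; rewrite /= (inj_eq g_inj). Qed.

Lemma rival_inj (T U : finType) (g : T -> U) (f : nat -> T) j :
  injective g -> rival f j <= rival (g \o f) j.
Proof.
move=> g_inj; apply/bigmax_leqP => i ne_i; rewrite -(occ_inj f i j g_inj).
by apply: (leq_bigmax_cond (g i)); rewrite /= (inj_eq g_inj).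
Qed.

Definition greedy_bit (M : nat) (p : bool -> nat) : bool :=
  if M <= minn (p false) (p true) then p false < p true else p true <= p false.

Lemma greedy_bit_other M p :
  M <= maxn (p false) (p true) -> M <= p (~~ greedy_bit M p).
Proof.
rewrite /greedy_bit; case: ifP => hM hmax.
  by case: (ltnP (p false) (p true)) => /=; lia.
by case: (leqP (p true) (p false)) => /=; lia.
Qed.

Lemma dominated_step (T : finType) (c : T -> nat) (p : bool -> nat) (x : T) :
  let M := \max_(i | i != x) c i in
  dominated c p ->
  dominated (fun i => c i + (x == i)) (fun b => p b + (greedy_bit M p == b)).
Proof.
move=> M; rewrite /dominated /greedy_bit; set a := p false; set b := p true.
case=> c_max c_min.
have [hM | hM] := leqP M (minn a b).
- have rival_small y : y != x -> c y <= minn a b.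
    by move=> ne_yx; apply: leq_trans hM; exact: leq_bigmax_cond.
  split => [i | i i' ne_ii'].
    by have := c_max i; case: (x =P i) => _; case: (ltnP a b) => /=; lia.
  suff: minn (c i + (x == i)) (c i' + (x == i')) <= minn a b.
    by case: (ltnP a b) => /=; lia.
  move: ne_ii'; case: (x =P i) => [<-|/eqP ne_xi];
    case: (x =P i') => [<-|/eqP ne_xi'] /= ne_ii'.
  + by [].
  + by have := rival_small i'; rewrite eq_sym; lia.
  + by have := rival_small i; rewrite eq_sym; lia.
  + by rewrite !addn0; exact: c_min.
- have [y /andP[ne_yx big_y] | none] := pickP (fun y => (y != x) && (minn a b < c y)).
    have cx_small : c x <= minn a b by have := c_min _ _ ne_yx; lia.
    have gap : minn a b < maxn a b by have := c_max y; lia.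
    split => [i | i i' ne_ii'].
      by have := c_max i; case: (x =P i) => [<-|_]; case: (leqP b a) => /=; lia.
    suff: minn (c i + (x == i)) (c i' + (x == i')) <= (minn a b).+1.
      by case: (leqP b a) => /=; lia.
    move: ne_ii'; case: (x =P i) => [<-|/eqP ne_xi];
    case: (x =P i') => [<-|/eqP ne_xi'] /= ne_ii'.
      + by [].
    + lia.
    + lia.
    + by rewrite !addn0; apply: leqW; exact: c_min.
  suff: M <= minn a b by rewrite leqNgt hM.
  apply/bigmax_leqP => y ne_yx; have := none y; rewrite ne_yx /=.
  by move/negbT; rewrite -leqNgt.
Qed.

Section Greedy.

Variables (T : finType) (f : nat -> T).

Fixpoint greedy_piles (j : nat) : bool -> nat :=
  if j is j'.+1 then
    let p := greedy_piles j' in fun b => p b + (greedy_bit (rival f j') p == b)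
  else fun=> 0.

Definition greedy_seq (j : nat) : bool := greedy_bit (rival f j) (greedy_piles j).

Lemma greedy_piles_occ j b : greedy_piles j b = occ greedy_seq b j.
Proof.
elim: j => [|j IHj]; first by rewrite /occ big_ord0.
by rewrite occS -IHj.
Qed.

Lemma greedy_piles_dominated j : dominated (occ f ^~ j) (greedy_piles j).
Proof.
elim: j => [|j IHj]; first by split=> *; rewrite /occ !big_ord0.
have [c_max c_min] := dominated_step (f j) IHj.
by split=> [i | i i' ne_ii']; rewrite !occS; [exact: c_max | exact: c_min].
Qed.

Lemma rival_greedy_seq j : rival f j <= rival greedy_seq j.
Proof.
have [c_max _] := greedy_piles_dominated j.
apply: leq_trans (leq_bigmax_cond (~~ greedy_seq j) _); last by case: greedy_seq.
rewrite -greedy_piles_occ; apply: greedy_bit_other.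
by apply/bigmax_leqP => i _; exact: c_max.
Qed.

End Greedy.

Lemma cnt_occ k s (e : 'I_k -> 'I_s.+1) (f : nat -> 'I_s.+1) :
  (forall l : 'I_k, e l = f l) -> forall i j, cnt e i j = occ f i j.+1.
Proof.
move=> ef i j; rewrite /cnt /occ (big_ord_widen k (fun l => nat_of_bool (f l == i))) //.
rewrite -sum1_card [LHS]big_mkcond [RHS]big_mkcond; apply: eq_bigr => l _.
by rewrite in_set ef ltnS; case: (_ <= _)%N; case: (_ == _).
Qed.

Lemma maxc_rival k s (e : 'I_k -> 'I_s.+1) (f : nat -> 'I_s.+1) :
  (forall l : 'I_k, e l = f l) -> forall j, maxc e j = rival f j.
Proof.
move=> ef j; rewrite /maxc /rival ef; apply: eq_bigr => i ne_i.
by rewrite (cnt_occ ef) occS eq_sym (negbTE ne_i) addn0.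
Qed.

Definition ord_of_bool s (b : bool) : 'I_s.+2 := inord b.

Lemma ord_of_boolK s (b : bool) : ord_of_bool s b = b :> nat.
Proof. by rewrite inordK //; case: b. Qed.

Lemma ord_of_bool_inj s : injective (ord_of_bool s).
Proof.
by move=> b b' /(congr1 (@nat_of_ord _)); rewrite !ord_of_boolK; case: b b' => [] [].
Qed.

Local Open Scope ring_scope.

Lemma Fstar_le_maxc (R : realType) d (alpha beta : R) k s (e e' : 'I_k -> 'I_s.+1) :
  0 <= beta -> (forall j, (maxc e j <= maxc e' j)%N) ->
  Fstar d alpha beta e' <= Fstar d alpha beta e.
Proof.
move=> beta_ge0 le_maxc; apply: ler_sum => j _; apply: le_min2 => //.
by apply: ler_wpM2r => //; apply: lerB => //; rewrite ler_nat.
Qed.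

Theorem lemma1 (R : realType) (k s d : nat) (alpha beta : R)
  (hk : (0 < k)%N) (hs : (0 < s)%N) (hd : (0 < d)%N)
  (ha : 0 <= alpha) (hb : 0 <= beta)
  (e : 'I_k -> 'I_s.+1) :
  exists e' : 'I_k -> 'I_s.+1,
    (forall j, (e' j < 2)%N) /\ Fstar d alpha beta e' <= Fstar d alpha beta e.
Proof.
case: k hk e => // k _ e; case: s hs e => // s _ e.
pose f l := e (inord l).
have ef (l : 'I_k.+1) : e l = f l by rewrite /f inord_val.
exists (fun l => ord_of_bool s (greedy_seq f l)); split.
  by move=> j; rewrite ord_of_boolK; case: greedy_seq.
apply: Fstar_le_maxc => // j.
rewrite (maxc_rival ef) (maxc_rival (f := ord_of_bool s \o greedy_seq f)) //.
exact: leq_trans (rival_greedy_seq f j) (rival_inj _ _ (@ord_of_bool_inj s)).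
Qed.
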